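(* Let $P$ be a poset with least element and $f:P\times P\to P$ monotone. Let $m,n\ge0$ be such that for every $x\in P$, $\mu_y.f(x,y)=f_x^m(\bot)$ where $f_x=f(x,-)$, and such that $h(x)=\mu_y.f(x,y)$ satisfies $\mu.h=h^n(\bot)$. Then the map $d(x)=f(x,x)$ has a least fixed point and $\mu_x.f(x,x)=d^{nm}(\bot)$.
   Context: $\mu$ denotes least fixed point; exponents denote iterated composition. *)

From HB Require Import structures.
From mathcomp Require Import all_boot all_order.
Set Implicit Arguments. Unset Strict Implicit. Unset Printing Implicit Defensive.
Import Order.TTheory.

Definition is_lfp (disp : Order.disp_t) (T : porderType disp) (g : T -> T) (a : T) : Prop :=
  g a = a /\ forall b : T, g b = b -> (a <= b)%O.

(* Write d x = f x x and h x = f_x^m(bot).  Both are monotone, and a := h^n(bot)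
   is a fixed point of d because it is the least fixed point f_a^m(bot) of f_a.
   Comparing the two iterations, f_z^j(bot) <= d^j(z) for every post-fixed point
   z of d, so h^k(bot) <= d^(km)(bot) and hence a <= d^(nm)(bot) <= a.  Finally,
   a fixed point b of d is a fixed point of f_b, so h b <= b, and every iterate
   h^k(bot) stays below b. *)

From HB Require Import structures.
From mathcomp Require Import all_boot all_order.
Import Order.TTheory.

Set Implicit Arguments.
Unset Strict Implicit.
Unset Printing Implicit Defensive.

Local Open Scope order_scope.

Section IterOrder.

Variables (disp : Order.disp_t) (T : porderType disp).
Implicit Types (g : T -> T) (x y b : T).

Lemma iter_le_homo g (g' : T -> T) x y j :
  (forall u v, u <= v -> g u <= g' v) -> x <= y -> iter j g x <= iter j g' y.
Proof. by move=> le_gg' le_xy; elim: j => //= j IH; exact: le_gg'. Qed.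

Lemma iter_le_iterS g x i :
  {homo g : u v / u <= v} -> x <= g x -> iter i g x <= iter i.+1 g x.
Proof. by move=> g_homo le_x_gx; rewrite iterSr; exact: iter_le_homo. Qed.

Lemma le_iter g x i : {homo g : u v / u <= v} -> x <= g x -> x <= iter i g x.
Proof.
move=> g_homo le_x_gx; elim: i => //= i IH.
exact: le_trans IH (iter_le_iterS i g_homo le_x_gx).
Qed.

Lemma iter_le_prefix g x b k :
  {homo g : u v / u <= v} -> x <= b -> g b <= b -> iter k g x <= b.
Proof.
move=> g_homo le_xb le_gb_b; elim: k => //= k IH.
exact: le_trans (g_homo _ _ IH) le_gb_b.
Qed.

End IterOrder.

Section DiagonalFixpoint.

Variables (disp : Order.disp_t) (T : bPOrderType disp) (f : T -> T -> T) (m : nat).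
Hypothesis f_mono :
  forall x x' y y' : T, x <= x' -> y <= y' -> f x y <= f x' y'.

Local Notation d := (fun x : T => f x x).
Local Notation h := (fun x : T => iter m (f x) \bot).

Lemma diag_homo : {homo d : x y / x <= y}.
Proof. by move=> x y le_xy; exact: f_mono. Qed.

Lemma iter_section_homo : {homo h : x y / x <= y}.
Proof. by move=> x y le_xy; apply: iter_le_homo => // u v; exact: f_mono. Qed.

Lemma iter_section_le_iter_diag z x j :
  x <= z -> z <= d z -> iter j (f z) x <= iter j d z.
Proof.
move=> le_xz le_z_dz; elim: j => //= j IH.
exact: f_mono (le_iter j diag_homo le_z_dz) IH.
Qed.

Lemma iter_section_le_iter_diag_mul k : iter k h \bot <= iter (k * m)%N d \bot.
Proof.
elim: k => //= k IH.
set z := iter (k * m)%N d \bot.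
have le_z_dz : z <= d z by apply: iter_le_iterS diag_homo (le0x _).
apply: le_trans (iter_section_homo IH) _.
by rewrite mulSn iterD; apply: iter_section_le_iter_diag (le0x _) le_z_dz.
Qed.

End DiagonalFixpoint.

Theorem mainTheorem15 (disp : Order.disp_t) (T : bPOrderType disp)
    (f : T -> T -> T) (m n : nat)
    (f_mono : forall x x' y y' : T, (x <= x')%O -> (y <= y')%O -> (f x y <= f x' y')%O)
    (hf : forall x : T, is_lfp (f x) (iter m (f x) \bot%O))
    (hh : is_lfp (fun x : T => iter m (f x) \bot%O)
                 (iter n (fun x : T => iter m (f x) \bot%O) \bot%O)) :
  is_lfp (fun x : T => f x x) (iter (n * m)%N (fun x : T => f x x) \bot%O).
Proof.
set a := iter n _ \bot in hh *.
have [h_a_eq _] := hh.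
have d_a_eq : f a a = a by have [] := hf a; rewrite h_a_eq.
have -> : iter (n * m) (fun x => f x x) \bot = a.
  apply: le_anti; apply/andP; split.
    by apply: iter_le_prefix (le0x a) _; [exact: diag_homo | rewrite d_a_eq].
  exact: iter_section_le_iter_diag_mul.
split=> // b d_b_eq.
have [_ h_least] := hf b.
rewrite /a; exact: iter_le_prefix n (iter_section_homo m f_mono) (le0x b) (h_least b d_b_eq).
Qed.
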